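(* Let $\mathfrak g$ be a Lie algebra with a classical $r$-matrix $R$ and post-Lie product $x\triangleright y=[R_-x,y]$. Then $\overline{\mathfrak g}=\mathfrak g_R$, and the Hopf algebra isomorphism $\phi:\mathcal U(\overline{\mathfrak g})\to\mathcal U_\ast(\mathfrak g)$ extending the identity of $V$ coincides with $F=m_{\mathfrak g}\circ(\mathrm{id}\otimes S_{\mathfrak g})\circ(R_+\otimes R_-)\circ\Delta_{\mathfrak g_R}$.
   Context: All vector spaces are finite dimensional over $\mathbb K=\mathbb R$ or $\mathbb C$. Let $\mathfrak g=(V,[\cdot,\cdot])$ be a Lie algebra. A classical $r$-matrix is a linear map $R:V\to V$ satisfying $[Rx,Ry]=R([Rx,y]+[x,Ry])-[x,y]$ for all $x,y$. Then $[x,y]_R:=\frac12([Rx,y]+[x,Ry])$ is a Lie bracket; $\mathfrak g_R:=(V,[\cdot,\cdot]_R)$. The maps $R_\pm:=\frac12(R\pm\mathrm{id})$ are Lie algebra morphisms $\mathfrak g_R\to\mathfrak g$, extended (same notation) to unital algebra morphisms $\mathcal U(\mathfrak g_R)\to\mathcal U(\mathfrak g)$. $\Delta_{\mathfrak g_R}$: coproduct of $\mathcal U(\mathfrak g_R)$; $m_{\mathfrak g}$, $S_{\mathfrak g}$, $\Delta$, $\epsilon$: product, antipode, coproduct, counit of $\mathcal U(\mathfrak g)$; Sweedler notation $\Delta A=A_{(1)}\otimes A_{(2)}$. The product $x\triangleright y:=[R_-x,y]$ makes $\mathfrak g$ a post-Lie algebra ($x\triangleright[y,z]=[x\triangleright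 y,z]+[y,x\triangleright z]$, $[x,y]\triangleright z=a_\triangleright(x,y,z)-a_\triangleright(y,x,z)$, $a_\triangleright(x,y,z)=x\triangleright(y\triangleright z)-(x\triangleright y)\triangleright z$); $\overline{\mathfrak g}:=(V,[[\cdot,\cdot]])$ with $[[x,y]]:=x\triangleright y-y\triangleright x+[x,y]$. The product $\triangleright$ extends uniquely to $\mathcal U(\mathfrak g)$ with $\mathbf 1\triangleright A=A$, $A\triangleright\mathbf 1=\epsilon(A)\mathbf 1$, $xA\triangleright B=x\triangleright(A\triangleright B)-(x\triangleright A)\triangleright B$, $A\triangleright BC=(A_{(1)}\triangleright B)(A_{(2)}\triangleright C)$ ($x\in V$). $A\ast B:=A_{(1)}(A_{(2)}\triangleright B)$; $\mathcal U_\ast(\mathfrak g):=(\mathcal U(\mathfrak g),\ast,\mathbf 1,\Delta,\epsilon)$ is a Hopf algebra, and the identity of $V$ extends uniquely to a Hopf algebra isomorphism $\phi:\mathcal U(\overline{\mathfrak g})\to\mathcal U_\ast(\mathfrak g)$. *)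

From HB Require Import structures.
From mathcomp Require Import all_boot all_order all_algebra.
Set Implicit Arguments. Unset Strict Implicit. Unset Printing Implicit Defensive.
Import GRing.Theory.
Local Open Scope ring_scope.

Section Defs.
Variable K : fieldType.

Definition bilin (A B W : lmodType K) (b : A -> B -> W) : Prop :=
  (forall (a : K) x y z, b (a *: x + y) z = a *: b x z + b y z) /\
  (forall (a : K) x y z, b z (a *: x + y) = a *: b z x + b z y).

Definition is_lie_bracket (V : lmodType K) (br : V -> V -> V) : Prop :=
  bilin br /\ (forall x, br x x = 0) /\
  (forall x y z, br x (br y z) + br y (br z x) + br z (br x y) = 0).

Definition classical_rmatrix (V : lmodType K) (br : V -> V -> V)
  (R : V -> V) : Prop :=
  forall x y, br (R x) (R y) = R (br (R x) y + br x (R y)) - br x y.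

Definition Rplus (V : lmodType K) (R : V -> V) (x : V) : V :=
  2%:R^-1 *: (R x + x).
Definition Rminus (V : lmodType K) (R : V -> V) (x : V) : V :=
  2%:R^-1 *: (R x - x).

Definition brR (V : lmodType K) (br : V -> V -> V) (R : V -> V) (x y : V) : V :=
  2%:R^-1 *: (br (R x) y + br x (R y)).

Definition trV (V : lmodType K) (br : V -> V -> V) (R : V -> V) (x y : V) : V :=
  br (Rminus R x) y.

Definition brbar (V : lmodType K) (br : V -> V -> V) (R : V -> V) (x y : V) : V :=
  trV br R x y - trV br R y x + br x y.

Definition is_UEA (V : lmodType K) (br : V -> V -> V) (U : algType K)
  (iota : {linear V -> U}) : Prop :=
  (forall x y, iota (br x y) = iota x * iota y - iota y * iota x) /\
  (forall (A : algType K) (f : {linear V -> A}),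
     (forall x y, f (br x y) = f x * f y - f y * f x) ->
     exists h : {lrmorphism U -> A},
       (forall x, h (iota x) = f x) /\
       (forall g : {lrmorphism U -> A}, (forall x, g (iota x) = f x) -> g =1 h)).

(* Sweedler sum: for a representation D A = [:: (a_i, c_i)] of an element
   sum_i a_i (x) c_i of U (x) U, apply the bilinear map b *)
Definition sw (U : Type) (W : nmodType) (D : U -> seq (U * U))
  (b : U -> U -> W) (A : U) : W :=
  \sum_(p <- D A) b p.1 p.2.

(* D represents (via finite sums of elementary tensors) the coproduct of the
   enveloping algebra U, i.e. the algebra morphism U -> U (x) U with
   iota x |-> iota x (x) 1 + 1 (x) iota x: tested against all bilinear maps *)
Definition is_coproduct (V : lmodType K) (U : algType K) (iota : V -> U)
  (D : U -> seq (U * U)) : Prop :=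
  forall (W : lmodType K) (b : U -> U -> W), bilin b ->
    (forall (a : K) A B, sw D b (a *: A + B) = a *: sw D b A + sw D b B) /\
    sw D b 1 = b 1 1 /\
    (forall x A, sw D b (iota x * A) =
                 sw D (fun a c => b (iota x * a) c) A +
                 sw D (fun a c => b a (iota x * c)) A).

Definition is_counit (V : lmodType K) (U : algType K) (iota : V -> U)
  (eps : U -> K) : Prop :=
  (forall (a : K) A B, eps (a *: A + B) = a * eps A + eps B) /\
  eps 1 = 1 /\ (forall A B, eps (A * B) = eps A * eps B) /\
  (forall x, eps (iota x) = 0).

Definition is_antipode (V : lmodType K) (U : algType K) (iota : V -> U)
  (S : U -> U) : Prop :=
  (forall (a : K) A B, S (a *: A + B) = a *: S A + S B) /\
  S 1 = 1 /\ (forall A B, S (A * B) = S B * S A) /\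
  (forall x, S (iota x) = - iota x).

Definition is_tr_ext (V : lmodType K) (br : V -> V -> V) (R : V -> V)
  (U : algType K) (iota : V -> U) (eps : U -> K) (D : U -> seq (U * U))
  (tr : U -> U -> U) : Prop :=
  bilin tr /\
  (forall x y, tr (iota x) (iota y) = iota (trV br R x y)) /\
  (forall A, tr 1 A = A) /\
  (forall A, tr A 1 = eps A *: 1) /\
  (forall x A B, tr (iota x * A) B = tr (iota x) (tr A B) - tr (tr (iota x) A) B) /\
  (forall A B C, tr A (B * C) = sw D (fun a c => tr a B * tr c C) A).

Definition star (U : algType K) (D : U -> seq (U * U)) (tr : U -> U -> U)
  (A B : U) : U :=
  sw D (fun a c => a * tr c B) A.

Definition Fmap (UR U : algType K) (DR : UR -> seq (UR * UR))
  (Rp Rm : UR -> U) (S : U -> U) (A : UR) : U :=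
  sw DR (fun a c => Rp a * S (Rm c)) A.

End Defs.

(* Both [[x,y]] and [x,y]_R equal (1/2)([Rx,y] + [x,Ry]) by antisymmetry alone.
   For the enveloping algebras, the key fact is that x |> C is the commutator
   [R_- x, C] on all of U(g): it holds on generators and both sides are
   derivations.  Since R_+ x = x + R_- x, this gives
   F(x A) = R_+ x F(A) - F(A) R_- x = x F(A) + x |> F(A) = x * F(A).
   Multiplicativity of F then reduces, as U(g_R) is generated by V, to
   (x * C) * E = x * (C * E), which follows from x |> being a derivation and a
   coderivation together with xA |> B = x |> (A |> B) - (x |> A) |> B;
   uniqueness is immediate from generation. *)

From HB Require Import structures.
From mathcomp Require Import all_boot all_order all_algebra.
From mathcomp Require Import boolp.
Import GRing.Theory.
Local Open Scope ring_scope.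
Set Implicit Arguments. Unset Strict Implicit.

Section LinearMaps.
Variable K : fieldType.
Implicit Types A B W : lmodType K.

Section OneMap.
Variables (A B : lmodType K) (f : A -> B).
Hypothesis lin_f : linear f.

Lemma linear_funB x y : f (x - y) = f x - f y.
Proof. exact: zmod_morphism_linear lin_f x y. Qed.

Lemma linear_fun0 : f 0 = 0.
Proof. by rewrite -(subrr 0) linear_funB subrr. Qed.

Lemma linear_funN x : f (- x) = - f x.
Proof. by rewrite -[- x]sub0r linear_funB linear_fun0 sub0r. Qed.

Lemma linear_funD x y : f (x + y) = f x + f y.
Proof. by rewrite -{1}[y]opprK linear_funB linear_funN opprK. Qed.

Lemma linear_funZ a x : f (a *: x) = a *: f x.
Proof. exact: scalable_linear lin_f a x. Qed.

End OneMap.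

Lemma linear_comp A B W (f : B -> W) (g : A -> B) :
  linear f -> linear g -> linear (fun x => f (g x)).
Proof. by move=> lf lg a x y; rewrite lg lf. Qed.

Lemma linear_mull (U : algType K) (u : U) : linear (fun a => u * a).
Proof. by move=> a x y; rewrite mulrDr scalerAr. Qed.

Lemma linear_mulr (U : algType K) (u : U) : linear (fun a => a * u).
Proof. by move=> a x y; rewrite mulrDl scalerAl. Qed.

Lemma bilin_linearl A B W (b : A -> B -> W) z : bilin b -> linear (b ^~ z).
Proof. by case=> bl _ a x y; apply: bl. Qed.

Lemma bilin_linearr A B W (b : A -> B -> W) z : bilin b -> linear (b z).
Proof. by case=> _ br a x y; apply: br. Qed.

Lemma bilin_comp A B A' B' W (b : A -> B -> W) (f : A' -> A) (g : B' -> B) :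
  bilin b -> linear f -> linear g -> bilin (fun a c => b (f a) (g c)).
Proof.
move=> hb lf lg; split=> a x y z; first by rewrite lf (bilin_linearl _ hb).
by rewrite lg (bilin_linearr _ hb).
Qed.

Lemma bilin_compl A B A' W (b : A -> B -> W) (f : A' -> A) :
  bilin b -> linear f -> bilin (fun a c => b (f a) c).
Proof. by move=> hb lf; apply: bilin_comp. Qed.

Lemma bilin_compr A B B' W (b : A -> B -> W) (g : B' -> B) :
  bilin b -> linear g -> bilin (fun a c => b a (g c)).
Proof. by move=> hb lg; apply: bilin_comp. Qed.

Lemma bilin_mul (U : algType K) : bilin (fun a c : U => a * c).
Proof. by split=> a x y z; rewrite ?mulrDl ?mulrDr -?scalerAl -?scalerAr. Qed.

Lemma eq_sw (U : Type) (W : nmodType) (D : U -> seq (U * U)) (b1 b2 : U -> U -> W) (X : U) :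
  (forall a c, b1 a c = b2 a c) -> sw D b1 X = sw D b2 X.
Proof. by move=> eq_b; apply: eq_bigr => p _; apply: eq_b. Qed.

Lemma sw_add (U : Type) (W : nmodType) (D : U -> seq (U * U)) (b1 b2 : U -> U -> W) (X : U) :
  sw D (fun a c => b1 a c + b2 a c) X = sw D b1 X + sw D b2 X.
Proof. exact: big_split. Qed.

Lemma sw_sub (U : Type) (W : zmodType) (D : U -> seq (U * U)) (b1 b2 : U -> U -> W) (X : U) :
  sw D (fun a c => b1 a c - b2 a c) X = sw D b1 X - sw D b2 X.
Proof. exact: sumrB. Qed.

Lemma linear_sw W W' (f : W -> W') : linear f ->
  forall (U : Type) (D : U -> seq (U * U)) (b : U -> U -> W) (X : U),
  f (sw D b X) = sw D (fun a c => f (b a c)) X.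
Proof.
move=> lf U D b X; rewrite /sw; elim: (D X) => [|p s IH]; first by rewrite !big_nil linear_fun0.
by rewrite !big_cons linear_funD // IH.
Qed.

Lemma scale_half_add (W : lmodType K) (w : W) : (2%:R : K) != 0 ->
  2%:R^-1 *: w + 2%:R^-1 *: w = w.
Proof.
by move=> two_neq0; rewrite -scalerDl -mulr2n -[2%:R^-1 *+ 2]mulr_natl mulfV ?scale1r.
Qed.

End LinearMaps.

Section EnvelopingInduction.
Variables (K : fieldType) (V : lmodType K) (U : algType K) (iota : {linear V -> U}).

Inductive iota_generated : U -> Prop :=
| gen_one : iota_generated 1
| gen_comb a A B : iota_generated A -> iota_generated B -> iota_generated (a *: A + B)
| gen_mull x A : iota_generated A -> iota_generated (iota x * A).

Lemma gen_zero : iota_generated 0.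
Proof. by have := gen_comb (-1) gen_one gen_one; rewrite scaleN1r addNr. Qed.

Lemma gen_mul A B : iota_generated A -> iota_generated B -> iota_generated (A * B).
Proof.
move=> gA gB; elim: gA => [|a A1 A2 _ g1 _ g2|x A1 _ gA1].
- by rewrite mul1r.
- by rewrite mulrDl -scalerAl; apply: gen_comb.
- by rewrite -mulrA; apply: gen_mull.
Qed.

Definition generatedb : {pred U} := fun u => `[< iota_generated u >].

Lemma generatedb_subalg_closed : GRing.subsemialg_closed generatedb.
Proof.
split; first exact/asboolP/gen_one.
- split=> [|u v /asboolP gu /asboolP gv]; first exact/asboolP/gen_zero.
  by apply/asboolP; have := gen_comb 1 gu gv; rewrite scale1r.
- move=> a u /asboolP gu; apply/asboolP.
  by have := gen_comb a gu gen_zero; rewrite addr0.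
- by move=> u v /asboolP gu /asboolP gv; apply/asboolP/gen_mul.
Qed.

Definition generated_subalg := {u : U | generatedb u}.
HB.instance Definition _ := [isSub for (@sval U generatedb : generated_subalg -> U)].
HB.instance Definition _ := [Choice of generated_subalg by <:].
HB.instance Definition _ :=
  GRing.isSubalgClosed.Build K U generatedb generatedb_subalg_closed.
HB.instance Definition _ := [SubChoice_isSubAlgebra of generated_subalg by <:].

Lemma generatedb_iota x : generatedb (iota x).
Proof. by apply/asboolP; rewrite -[iota x]mulr1; apply/gen_mull/gen_one. Qed.

Definition iota_sub (x : V) : generated_subalg := Sub (iota x) (generatedb_iota x).

Lemma iota_sub_linear : linear iota_sub.
Proof. by move=> a x y; apply: val_inj; rewrite /= linearP. Qed.

HB.instance Definition _ :=
  GRing.isLinear.Build K V generated_subalg _ iota_sub iota_sub_linear.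

Definition sub_val (u : generated_subalg) : U := val u.
HB.instance Definition _ := GRing.RMorphism.copy sub_val val.
HB.instance Definition _ := GRing.Linear.copy sub_val val.

Variable br : V -> V -> V.
Hypothesis hU : is_UEA br iota.

(* The universal property applied to the subalgebra generated by [iota V]
   yields a retraction onto it; uniqueness forces it to be the identity. *)
Lemma UEA_generated A : iota_generated A.
Proof.
have [iota_br univ] := hU.
have sub_br x y : iota_sub (br x y) = iota_sub x * iota_sub y - iota_sub y * iota_sub x.
  by apply: val_inj; rewrite /= iota_br.
have [h [h_iota _]] := univ _ iota_sub sub_br.
have [id_U [_ id_U_unique]] := univ _ iota iota_br.
have val_h : (sub_val \o h) =1 id_U by apply: id_U_unique => x; rewrite /= h_iota.
have id_eq : (@idfun U) =1 id_U by apply: id_U_unique.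
have <- : sub_val (h A) = A by rewrite [LHS]val_h -id_eq.
exact/asboolP/(valP (h A)).
Qed.

Lemma UEA_ind (P : U -> Prop) :
  P 1 -> (forall a A B, P A -> P B -> P (a *: A + B)) ->
  (forall x A, P A -> P (iota x * A)) -> forall A, P A.
Proof. by move=> P1 Pcomb Pmull A; elim: (UEA_generated A) => *; auto. Qed.

End EnvelopingInduction.

Section Coproduct.
Variables (K : fieldType) (V : lmodType K) (U : algType K) (iota : {linear V -> U}).
Variable D : U -> seq (U * U).
Hypothesis hD : is_coproduct iota D.

Lemma linear_coproduct (W : lmodType K) (b : U -> U -> W) : bilin b -> linear (sw D b).
Proof. by move=> hb; have [lin_sw _] := hD hb. Qed.

Lemma coproduct1 (W : lmodType K) (b : U -> U -> W) : bilin b -> sw D b 1 = b 1 1.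
Proof. by move=> hb; have [_ []] := hD hb. Qed.

Lemma coproduct_mull (W : lmodType K) (b : U -> U -> W) : bilin b -> forall x A,
  sw D b (iota x * A) =
  sw D (fun a c => b (iota x * a) c) A + sw D (fun a c => b a (iota x * c)) A.
Proof. by move=> hb x A; have [_ [_ ->]] := hD hb. Qed.

Lemma coproduct_iota (W : lmodType K) (b : U -> U -> W) : bilin b -> forall x,
  sw D b (iota x) = b (iota x) 1 + b 1 (iota x).
Proof.
move=> hb x; rewrite -[iota x]mulr1 coproduct_mull //.
by rewrite !coproduct1 ?mulr1 //; [apply: bilin_compr | apply: bilin_compl];
   rewrite //; apply: linear_mull.
Qed.

Variable br : V -> V -> V.
Hypothesis hU : is_UEA br iota.

Lemma coproduct_mulr (W : lmodType K) (b : U -> U -> W) : bilin b -> forall x A,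
  sw D b (A * iota x) =
  sw D (fun a c => b (a * iota x) c) A + sw D (fun a c => b a (c * iota x)) A.
Proof.
move=> hb x A; elim/(UEA_ind hU): A W b hb => [|a A B IHA IHB|y A IHA] W b hb.
- by rewrite mul1r coproduct_iota // !coproduct1 ?mul1r //;
    [apply: bilin_compr | apply: bilin_compl]; rewrite //; apply: linear_mulr.
- rewrite mulrDl -scalerAl !(linear_coproduct hb) IHA // IHB //.
  rewrite !(linear_coproduct (bilin_compl hb (linear_mulr _))).
  by rewrite !(linear_coproduct (bilin_compr hb (linear_mulr _))) scalerDr addrACA.
- have hbl u := bilin_compl hb (linear_mull u).
  have hbr u := bilin_compr hb (linear_mull u).
  rewrite -mulrA coproduct_mull // !IHA //.
  rewrite coproduct_mull; last exact: bilin_compl hb (linear_mulr _).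
  rewrite coproduct_mull; last exact: bilin_compr hb (linear_mulr _).
  rewrite addrACA; congr (_ + _ + (_ + _)); by apply: eq_sw => a c; rewrite mulrA.
Qed.

End Coproduct.

Section PostLieExtension.
Variables (K : fieldType) (V : lmodType K) (br : V -> V -> V) (R : V -> V).
Variables (U : algType K) (iota : {linear V -> U}) (eps : U -> K).
Variables (D : U -> seq (U * U)) (tr : U -> U -> U).
Hypothesis hU : is_UEA br iota.
Hypothesis heps : is_counit iota eps.
Hypothesis hD : is_coproduct iota D.
Hypothesis htr : is_tr_ext br R iota eps D tr.

Lemma tr_bilin : bilin tr. Proof. by case: htr. Qed.

Lemma tr_iota x y : tr (iota x) (iota y) = iota (trV br R x y).
Proof. by case: htr => _ []. Qed.

Lemma tr1l A : tr 1 A = A. Proof. by case: htr => _ [_ []]. Qed.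

Lemma tr_iota1 x : tr (iota x) 1 = 0.
Proof. by case: htr => _ [_ [_ [-> _]]]; case: heps => _ [_ [_ ->]]; rewrite scale0r. Qed.

Lemma tr_mull_iota x A B : tr (iota x * A) B = tr (iota x) (tr A B) - tr (tr (iota x) A) B.
Proof. by case: htr => _ [_ [_ [_ []]]]. Qed.

Lemma linear_trl B : linear (tr ^~ B). Proof. exact: bilin_linearl tr_bilin. Qed.
Lemma linear_trr A : linear (tr A). Proof. exact: bilin_linearr tr_bilin. Qed.

Lemma tr_iota_derivation x B C : tr (iota x) (B * C) = tr (iota x) B * C + B * tr (iota x) C.
Proof.
case: htr => _ [_ [_ [_ [_ ->]]]]; rewrite coproduct_iota ?tr1l //.
by apply: bilin_comp; [exact: bilin_mul | exact: linear_trl | exact: linear_trl].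
Qed.

Lemma tr_iota_commutator x C :
  tr (iota x) C = iota (Rminus R x) * C - C * iota (Rminus R x).
Proof.
set r := iota (Rminus R x).
elim/(UEA_ind hU): C => [|a A B IHA IHB|y A IHA].
- by rewrite tr_iota1 mulr1 mul1r subrr.
- rewrite linear_trr IHA IHB mulrDr mulrDl -scalerAr -scalerAl scalerBr.
  by rewrite addrACA opprD.
- have [iota_br _] := hU.
  rewrite tr_iota_derivation IHA tr_iota /trV iota_br.
  by rewrite mulrBl mulrBr !mulrA addrA subrK.
Qed.

Lemma coproduct_tr_iota (W : lmodType K) (b : U -> U -> W) : bilin b -> forall x C,
  sw D b (tr (iota x) C) =
  sw D (fun a c => b (tr (iota x) a) c) C + sw D (fun a c => b a (tr (iota x) c)) C.
Proof.
move=> hb x C; set r := iota (Rminus R x).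
have ad_l : sw D (fun a c => b (tr (iota x) a) c) C =
            sw D (fun a c => b (r * a) c) C - sw D (fun a c => b (a * r) c) C.
  rewrite -sw_sub; apply: eq_sw => a c.
  by rewrite tr_iota_commutator (linear_funB (bilin_linearl _ hb)).
have ad_r : sw D (fun a c => b a (tr (iota x) c)) C =
            sw D (fun a c => b a (r * c)) C - sw D (fun a c => b a (c * r)) C.
  rewrite -sw_sub; apply: eq_sw => a c.
  by rewrite tr_iota_commutator (linear_funB (bilin_linearr _ hb)).
rewrite ad_l ad_r tr_iota_commutator (linear_funB (linear_coproduct hD hb)).
by rewrite coproduct_mull // (coproduct_mulr hD hU) // opprD addrACA.
Qed.

Lemma bilin_star E : bilin (fun a c : U => a * tr c E).
Proof. exact: bilin_compr (@bilin_mul _ U) (linear_trl E). Qed.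

Lemma linear_star E : linear (star D tr ^~ E).
Proof. by move=> a A B; rewrite /star (linear_coproduct hD (bilin_star E)). Qed.

Lemma star1l E : star D tr 1 E = E.
Proof. by rewrite /star (coproduct1 hD (bilin_star E)) mul1r tr1l. Qed.

Lemma star_iotal x E : star D tr (iota x) E = iota x * E + tr (iota x) E.
Proof. by rewrite /star (coproduct_iota hD (bilin_star E)) tr1l mul1r. Qed.

Lemma star_iotaA x C E :
  star D tr (star D tr (iota x) C) E = star D tr (iota x) (star D tr C E).
Proof.
rewrite !star_iotal (linear_funD (linear_star E)) /star.
rewrite (coproduct_mull hD (bilin_star E)) (coproduct_tr_iota (bilin_star E)).
rewrite (linear_sw (linear_mull (iota x))) (linear_sw (linear_trr (iota x))).
rewrite -!sw_add; apply: eq_sw => a c.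
rewrite tr_mull_iota tr_iota_derivation mulrBr mulrA -addrA; congr (_ + _).
by rewrite addrC addrA addrAC addrK addrC.
Qed.

End PostLieExtension.

Section RMatrix.
Variables (K : fieldType) (V : lmodType K) (br : V -> V -> V) (R : V -> V).
Hypothesis two_neq0 : (2%:R : K) != 0.

Lemma Rplus_Rminus x : Rplus R x = x + Rminus R x.
Proof.
apply/eqP; rewrite -subr_eq /Rplus /Rminus -scalerBr opprB addrC addrA subrK.
by rewrite scalerDr scale_half_add.
Qed.

Lemma alt_bilin_anticomm (W : lmodType K) (b : V -> V -> W) :
  bilin b -> (forall x, b x x = 0) ->
  forall x y, b y x = - b x y.
Proof.
move=> hb alt x y; apply/eqP; rewrite -addr_eq0 addrC -[X in _ == X](alt (x + y)).
by rewrite (linear_funD (bilin_linearl _ hb)) !(linear_funD (bilin_linearr _ hb)) !alt add0r addr0.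
Qed.

Lemma brbar_brR : bilin br -> (forall x, br x x = 0) ->
  forall x y, brbar br R x y = brR br R x y.
Proof.
move=> hb alt x y; have anti := alt_bilin_anticomm hb alt.
rewrite /brbar /trV /Rminus /brR !(linear_funZ (bilin_linearl _ hb)).
rewrite !(linear_funB (bilin_linearl _ hb)) (anti x y) (anti x (R y)).
rewrite -{3}(scale_half_add (br x y) two_neq0) -scalerBr -!scalerDr; congr (_ *: _).
by rewrite opprB opprK addrACA subrK [- _ + _]addrC subrK.
Qed.

End RMatrix.

Section EnvelopingMap.
Variables (K : fieldType) (V : lmodType K) (br : V -> V -> V) (R : V -> V).
Variables (U : algType K) (iota : {linear V -> U}) (eps : U -> K).
Variables (D : U -> seq (U * U)) (tr : U -> U -> U) (S : U -> U).
Hypothesis hU : is_UEA br iota.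
Hypothesis heps : is_counit iota eps.
Hypothesis hD : is_coproduct iota D.
Hypothesis htr : is_tr_ext br R iota eps D tr.
Hypothesis hS : is_antipode iota S.
Variables (UR : algType K) (iotaR : {linear V -> UR}) (DR : UR -> seq (UR * UR)).
Hypothesis hUR : is_UEA (brR br R) iotaR.
Hypothesis hDR : is_coproduct iotaR DR.
Variables Rp Rm : {lrmorphism UR -> U}.
Hypothesis hRp : forall x, Rp (iotaR x) = iota (Rplus R x).
Hypothesis hRm : forall x, Rm (iotaR x) = iota (Rminus R x).
Hypothesis two_neq0 : (2%:R : K) != 0.

Local Notation F := (Fmap DR Rp Rm S).

Lemma bilin_Fmap : bilin (fun a c => Rp a * S (Rm c)).
Proof.
have [lin_S _] := hS.
apply: bilin_comp; [exact: bilin_mul | exact: linearP | ].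
exact: linear_comp lin_S (@linearP _ _ _ _ Rm).
Qed.

Lemma linear_Fmap : linear F.
Proof. by move=> a A B; rewrite /Fmap (linear_coproduct hDR bilin_Fmap). Qed.

Lemma Fmap1 : F 1 = 1.
Proof.
have [_ [S1 _]] := hS.
by rewrite /Fmap (coproduct1 hDR bilin_Fmap) !rmorph1 S1 mulr1.
Qed.

Lemma Fmap_iota x : F (iotaR x) = iota x.
Proof.
have [_ [S1 [_ S_iota]]] := hS.
rewrite /Fmap (coproduct_iota hDR bilin_Fmap) !rmorph1 S1 mulr1 mul1r hRp hRm S_iota.
by rewrite Rplus_Rminus // linearD addrK.
Qed.

Lemma Fmap_iota_mull x A : F (iotaR x * A) = star D tr (iota x) (F A).
Proof.
have [_ [_ [S_mul S_iota]]] := hS.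
rewrite /Fmap (coproduct_mull hDR bilin_Fmap) (star_iotal hD htr).
rewrite (tr_iota_commutator hU heps hD htr).
have -> : sw DR (fun a c => Rp (iotaR x * a) * S (Rm c)) A =
          sw DR (fun a c => iota (Rplus R x) * (Rp a * S (Rm c))) A.
  by apply: eq_sw => a c; rewrite rmorphM /= hRp mulrA.
have -> : sw DR (fun a c => Rp a * S (Rm (iotaR x * c))) A =
          sw DR (fun a c => Rp a * S (Rm c) * - iota (Rminus R x)) A.
  by apply: eq_sw => a c; rewrite rmorphM S_mul /= hRm S_iota mulrA.
rewrite -(linear_sw (linear_mull _)) -(linear_sw (linear_mulr _)).
by rewrite Rplus_Rminus // linearD mulrDl mulrN addrA.
Qed.

Lemma Fmap_mul A B : F (A * B) = star D tr (F A) (F B).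
Proof.
elim/(UEA_ind hUR): A => [|a A1 A2 IH1 IH2|y A IHA].
- by rewrite mul1r Fmap1 (star1l hD htr).
- by rewrite mulrDl -scalerAl !linear_Fmap (linear_star hD htr) IH1 IH2.
- by rewrite -mulrA !Fmap_iota_mull IHA (star_iotaA hU heps hD htr).
Qed.

Lemma Fmap_unique (phi : UR -> U) : linear phi -> phi 1 = 1 ->
  (forall A B, phi (A * B) = star D tr (phi A) (phi B)) ->
  (forall x, phi (iotaR x) = iota x) -> phi =1 F.
Proof.
move=> lin_phi phi1 phi_mul phi_iota; elim/(UEA_ind hUR) => [|a A B IHA IHB|y A IHA].
- by rewrite phi1 Fmap1.
- by rewrite lin_phi linear_Fmap IHA IHB.
- by rewrite phi_mul phi_iota Fmap_iota_mull IHA.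
Qed.

End EnvelopingMap.

Theorem mainTheorem8
  (K : fieldType) (hK : [pchar K] =i pred0)
  (V : vectType K) (br : V -> V -> V) (hbr : is_lie_bracket br)
  (R : {linear V -> V}) (hR : classical_rmatrix br R)
  (U : algType K) (iota : {linear V -> U}) (hU : is_UEA br iota)
  (eps : U -> K) (heps : is_counit iota eps)
  (S : U -> U) (hS : is_antipode iota S)
  (D : U -> seq (U * U)) (hD : is_coproduct iota D)
  (tr : U -> U -> U) (htr : is_tr_ext br R iota eps D tr)
  (UR : algType K) (iotaR : {linear V -> UR}) (hUR : is_UEA (brR br R) iotaR)
  (DR : UR -> seq (UR * UR)) (hDR : is_coproduct iotaR DR)
  (Rp Rm : {lrmorphism UR -> U})
  (hRp : forall x, Rp (iotaR x) = iota (Rplus R x))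
  (hRm : forall x, Rm (iotaR x) = iota (Rminus R x)) :
  let F := Fmap DR Rp Rm S in
  (forall x y, brbar br R x y = brR br R x y) /\
  ((forall (a : K) A B, F (a *: A + B) = a *: F A + F B) /\
   F 1 = 1 /\
   (forall A B, F (A * B) = star D tr (F A) (F B)) /\
   (forall x, F (iotaR x) = iota x)) /\
  (forall phi : UR -> U,
     (forall (a : K) A B, phi (a *: A + B) = a *: phi A + phi B) ->
     phi 1 = 1 ->
     (forall A B, phi (A * B) = star D tr (phi A) (phi B)) ->
     (forall x, phi (iotaR x) = iota x) ->
     forall A, phi A = F A).
Proof.
have two_neq0 : (2%:R : K) != 0 by move/pcharf0P: hK => ->.
have [bilin_br [alt_br _]] := hbr.
(* The r-matrix identity [hR] only makes [brR br R] a Lie bracket, which [hUR] presupposes. *)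
split; first exact (brbar_brR R two_neq0 bilin_br alt_br).
split; last exact (Fmap_unique hU heps hD htr hS hUR hDR hRp hRm two_neq0).
split; first exact (linear_Fmap hS hDR Rp Rm).
split; first exact (Fmap1 hS hDR Rp Rm).
split; first exact (Fmap_mul hU heps hD htr hS hUR hDR hRp hRm two_neq0).
exact (Fmap_iota hS hDR hRp hRm two_neq0).
Qed.
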